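(* Let $g_N\in H_N^{\mathrm{rw}}$ converge strongly to $g\in H^{\mathrm{bm}}$ with respect to the Hilbert space convergence $H_N^{\mathrm{rw}}\to H^{\mathrm{bm}}$. Define $\hat g_N=g_N-g_N(0)\mathbf 1_{\{0\}}$ (viewed as an element of $H_N^{\mathrm{sip}}$) and $\hat g=g-g(0)\mathbf 1_{\{0\}}$, i.e. the element of $H^{\mathrm{sbm}}$ that equals $g$ Lebesgue-a.e. and vanishes at $0$. Then $\hat g_N$ converges strongly to $\hat g$ with respect to the Hilbert space convergence $H_N^{\mathrm{sip}}\to H^{\mathrm{sbm}}$.
   Context: $\gamma>0$; $\mu_N$ gives mass $\frac1N$ to each point of $\frac1N\mathbb Z$; $\nu_{\gamma,N}=\mu_N+\sqrt2\gamma\delta_0$. $H_N^{\mathrm{rw}}=L^2(\frac1N\mathbb Z,\mu_N)$, $H^{\mathrm{bm}}=L^2(\mathbb R,dx)$, with Hilbert convergence witnessed by $C^{\mathrm{rw}}=C_c^\infty(\mathbb R)$ and $\Phi_Nf=f|_{\frac1N\mathbb Z}$. $H_N^{\mathrm{sip}}=L^2(\frac1N\mathbb Z,\nu_{\gamma,N})$, $H^{\mathrm{sbm}}=L^2(\mathbb R,dx+\sqrt2\gamma\delta_0)$, with Hilbert convergence witnessed by $C^{\mathrm{sip}}=\{f+\lambda\mathbf 1_{\{0\}}:f\in C_c^\infty(\mathbb R),\lambda\in\mathbb R\}$ and $\Phi_Nf=f|_{\frac1N\mathbb Z}$. In either setting, $f_N\in H_N$ converges strongly to $f\in H$ if there exist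 $\tilde f_M$ in the respective dense set $C$ with $\|\tilde f_M-f\|_H\to0$ and $\lim_{M\to\infty}\limsup_{N\to\infty}\|\Phi_N\tilde f_M-f_N\|_{H_N}=0$. *)

From HB Require Import structures.
From mathcomp Require Import all_boot all_order all_algebra.
From mathcomp Require Import all_classical all_reals all_analysis.
Set Implicit Arguments. Unset Strict Implicit. Unset Printing Implicit Defensive.
Import Order.TTheory GRing.Theory Num.Theory.
Import numFieldNormedType.Exports.
Local Open Scope classical_set_scope.
Local Open Scope ring_scope.

Section Defs.
Variable R : realType.

Definition lattice (N : nat) : set R :=
  [set x | exists k : int, x = k%:~R / N%:R].

(* f : R -> R represents an element of H_N (only values on (1/N)Z matter) *)
Definition normsq_rw (N : nat) (f : R -> R) : \bar R :=
  \esum_(x in lattice N) ((N%:R)^-1 * f x ^+ 2)%:E.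
Definition normsq_sip (gamma : R) (N : nat) (f : R -> R) : \bar R :=
  (normsq_rw N f + (Num.sqrt 2 * gamma * f 0 ^+ 2)%:E)%E.
Definition normsq_bm (f : R -> R) : \bar R :=
  (\int[lebesgue_measure]_x ((f x ^+ 2)%:E))%E.
Definition normsq_sbm (gamma : R) (f : R -> R) : \bar R :=
  (normsq_bm f + (Num.sqrt 2 * gamma * f 0 ^+ 2)%:E)%E.

Definition smooth (f : R -> R) : Prop :=
  forall (n : nat) (x : R), derivable (iter n (fun h : R -> R => derive1 h) f) x 1.
Definition compact_support (f : R -> R) : Prop :=
  exists M : R, forall x, M < `|x| -> f x = 0.
Definition Crw (f : R -> R) : Prop := smooth f /\ compact_support f.
Definition Csip (f : R -> R) : Prop :=
  exists (f0 : R -> R) (lam : R),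
    Crw f0 /\ f = (fun x => f0 x + (if x == 0 then lam else 0)).

(* strong convergence H_N^rw -> H^bm (Phi_N f = f restricted to (1/N)Z) *)
Definition strong_conv_rw (gN : nat -> R -> R) (g : R -> R) : Prop :=
  exists ft : nat -> R -> R,
    (forall M, Crw (ft M)) /\
    ((fun M => sqrte (normsq_bm (ft M \- g))) @ \oo --> 0%E) /\
    ((fun M => limn_esup (fun N => sqrte (normsq_rw N (ft M \- gN N))))
        @ \oo --> 0%E).

Definition strong_conv_sip (gamma : R) (gN : nat -> R -> R) (g : R -> R) : Prop :=
  exists ft : nat -> R -> R,
    (forall M, Csip (ft M)) /\
    ((fun M => sqrte (normsq_sbm gamma (ft M \- g))) @ \oo --> 0%E) /\
    ((fun M => limn_esup (fun N => sqrte (normsq_sip gamma N (ft M \- gN N))))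
        @ \oo --> 0%E).

Definition kill0 (f : R -> R) : R -> R := fun x => if x == 0 then 0 else f x.

End Defs.

From HB Require Import structures.
From mathcomp Require Import all_boot all_order all_algebra.
From mathcomp Require Import all_classical all_reals all_analysis.
From mathcomp Require Import measurable_realfun.
Import Order.TTheory GRing.Theory Num.Theory.
Import numFieldNormedType.Exports.
Local Open Scope classical_set_scope.
Local Open Scope ring_scope.

(* If f_M in C_c^oo witnesses g_N -> g, then kill0 f_M = f_M - f_M(0) 1_{0}
   lies in C^sip and witnesses kill0 g_N -> kill0 g.  Killing the value at 0
   removes the contribution of the atom sqrt2 gamma delta_0 on both sides; in
   the continuum it changes a function only on a Lebesgue-null set, and on the
   lattice it can only decrease the norm. *)

Lemma le_limn_esup (R : realType) (u v : (\bar R)^nat) :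
  (forall n, (u n <= v n)%E) -> (limn_esup u <= limn_esup v)%E.
Proof.
move=> uv; rewrite !limn_esup_lim; apply: lee_lim; try exact: is_cvg_esups.
apply: nearW => n; apply: ge_ereal_sup => _ [m /= nm <-].
by apply: le_ereal_sup_tmp; exists (v m) => //; exists m.
Qed.

Lemma limn_esup_cst (R : realType) (c : \bar R) : limn_esup (fun=> c) = c.
Proof.
rewrite is_cvg_limn_esupE; first by rewrite lim_cst.
exact: is_cvg_cst.
Qed.

Lemma limn_esup_ge0 (R : realType) (u : (\bar R)^nat) :
  (forall n, (0 <= u n)%E) -> (0 <= limn_esup u)%E.
Proof. by move=> u_ge0; rewrite -(limn_esup_cst _ 0%E); exact: le_limn_esup. Qed.

Section kill0.
Variable R : realType.
Implicit Types (f h : R -> R) (gamma : R) (N : nat).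

Lemma kill0B f h : kill0 f \- kill0 h = kill0 (f \- h).
Proof. by apply/funext => x; rewrite /kill0 /=; case: ifP => // _; rewrite subr0. Qed.

Lemma kill0_0 f : kill0 f 0 = 0.
Proof. by rewrite /kill0 eqxx. Qed.

Lemma measurable_fun_kill0 h : measurable_fun setT h -> measurable_fun setT (kill0 h).
Proof.
move=> mh; apply: measurable_fun_ifT => //.
apply: (measurable_fun_bool true).
rewrite (_ : _ `&` _ = [set 0]); first exact: measurable_set1.
by apply/seteqP; split => x /=; [case=> _ /eqP|move=> ->; split=> //; rewrite eqxx].
Qed.

Lemma Crw_measurable f : Crw f -> measurable_fun setT f.
Proof.
case=> f_smooth _; apply: continuous_measurable_fun => x.
by apply: differentiable_continuous; apply/derivable1_diffP; exact: (f_smooth 0%N x).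
Qed.

Lemma Csip_kill0 f : Crw f -> Csip (kill0 f).
Proof.
move=> Cf; exists f, (- f 0); split => //.
apply/funext => x; rewrite /kill0; case: ifPn => [/eqP ->|_].
  by rewrite subrr.
by rewrite addr0.
Qed.

Lemma normsq_bm_kill0 h : measurable_fun setT h -> normsq_bm (kill0 h) = normsq_bm h.
Proof.
move=> mh; apply: ae_eq_integral => //.
- by apply/measurable_EFinP; apply: measurable_funX; exact: measurable_fun_kill0.
- by apply/measurable_EFinP; exact: measurable_funX.
- exists [set 0]; split; [exact: measurable_set1|exact: lebesgue_measure_set1|].
  move=> x /=; apply: contra_notP => /eqP x_neq0 _.
  by rewrite /kill0 (negbTE x_neq0).
Qed.

Lemma normsq_sbm_kill0 gamma h :
  measurable_fun setT h -> normsq_sbm gamma (kill0 h) = normsq_bm h.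
Proof.
by move=> mh; rewrite /normsq_sbm normsq_bm_kill0 // kill0_0 expr0n mulr0 adde0.
Qed.

Lemma normsq_rw_ge0 N h : (0 <= normsq_rw N h)%E.
Proof. by apply: esum_ge0 => x _; rewrite lee_fin mulr_ge0 ?invr_ge0 ?sqr_ge0. Qed.

Lemma normsq_rw_kill0_le N h : (normsq_rw N (kill0 h) <= normsq_rw N h)%E.
Proof.
apply: le_esum => x _; rewrite lee_fin /kill0; case: ifPn => // _.
by rewrite expr0n mulr0 mulr_ge0 ?invr_ge0 ?sqr_ge0.
Qed.

Lemma normsq_sip_kill0_le gamma N h :
  (normsq_sip gamma N (kill0 h) <= normsq_rw N h)%E.
Proof.
by rewrite /normsq_sip kill0_0 expr0n mulr0 adde0; exact: normsq_rw_kill0_le.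
Qed.

End kill0.

Theorem proposition5p11 (R : realType) (gamma : R) (gN : nat -> R -> R) (g : R -> R) :
  0 < gamma ->
  (forall N : nat, (normsq_rw N (gN N) < +oo)%E) ->
  measurable_fun setT g ->
  (normsq_bm g < +oo)%E ->
  strong_conv_rw gN g ->
  strong_conv_sip gamma (fun N => kill0 (gN N)) (kill0 g).
Proof.
move=> _ _ mg _ [ft [Cft [ft_to_g ft_to_gN]]].
exists (fun M => kill0 (ft M)); split; [|split].
- by move=> M; exact: Csip_kill0.
- apply: cvg_trans ft_to_g; apply: near_eq_cvg; apply: nearW => M /=.
  by rewrite kill0B normsq_sbm_kill0 //; apply: measurable_funB => //; exact: Crw_measurable.
- apply: (squeeze_cvge _ (cvg_cst 0%E) ft_to_gN); apply: nearW => M /=.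
  apply/andP; split; first by apply: limn_esup_ge0 => N; exact: sqrte_ge0.
  apply: le_limn_esup => N; rewrite kill0B lee_sqrt ?normsq_rw_ge0 //.
  exact: normsq_sip_kill0_le.
Qed.
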